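(* Let $\lambda\ge 1$ and let $A$ be an $m\times n$ rational matrix of full column rank. Consider the following procedure. Set $A^{(0)}=A$ and $\mathcal{B}=\emptyset$. For $k=1,\dots,n$: obtain a vector $b\in\operatorname{col}(A)\setminus\operatorname{span}(\mathcal{B})$ with $\|b\|_0\le\lambda\cdot\min\{\|a\|_0: a\in\operatorname{col}(A)\setminus\operatorname{span}(\mathcal{B})\}$, together with a column $a_j$ of $A^{(k-1)}$ that is not in $\mathcal{B}$ and such that replacing $a_j$ by $b$ preserves the column span; let $A^{(k)}$ be $A^{(k-1)}$ with $a_j$ replaced by $b$, and add $b$ to $\mathcal{B}$. Let $N$ be the matrix whose columns are the $n$ vectors in $\mathcal{B}$. Then $N=AX$ for some invertible $X$, and $\operatorname{nnz}(N)\le\lambda\cdot\min\{\operatorname{nnz}(AY): Y \text{ invertible}\}$; i.e. a $\lambda$-approximation oracle for sparsest independent vector yields a $\lambda$-approximation for matrix sparsification.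
   Context: $\|v\|_0$ is the number of nonzero entries of $v$, $\operatorname{nnz}(M)$ the number of nonzero entries of $M$, $\operatorname{col}(A)$ the column span, and $\operatorname{span}(\mathcal{B})$ the span of a set of vectors (the zero space if empty). Sparsest independent vector (SIV): given a full-column-rank matrix $A$ and a set $\mathcal{B}$ of columns of $A$, find $a\in\operatorname{col}(A)\setminus\operatorname{span}(\mathcal{B})$ minimizing $\|a\|_0$. *)

From HB Require Import structures.
From mathcomp Require Import all_boot all_order all_algebra.
Set Implicit Arguments. Unset Strict Implicit. Unset Printing Implicit Defensive.
Import Order.TTheory GRing.Theory Num.Theory.
Local Open Scope ring_scope.

Definition nnzv {F : fieldType} {m : nat} (v : 'cV[F]_m) : nat :=
  #|[set i : 'I_m | v i 0 != 0]|.

Definition nnz {F : fieldType} {m n : nat} (M : 'M[F]_(m, n)) : nat :=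
  #|[set ij : 'I_m * 'I_n | M ij.1 ij.2 != 0]|.

Definition in_col {F : fieldType} {m n : nat} (A : 'M[F]_(m, n)) (v : 'cV[F]_m) : Prop :=
  exists x : 'cV[F]_n, v = A *m x.

Definition in_span_prefix {F : fieldType} {m : nat} (b : nat -> 'cV[F]_m) (k : nat)
  (v : 'cV[F]_m) : Prop :=
  exists c : nat -> F, v = \sum_(1 <= i < k) c i *: b i.

Definition replace_col {F : fieldType} {m n : nat} (M : 'M[F]_(m, n)) (j : 'I_n)
  (v : 'cV[F]_m) : 'M[F]_(m, n) :=
  \matrix_(r < m, c < n) (if c == j then v r 0 else M r c).

Definition cols_mx {F : fieldType} {m : nat} (n : nat) (b : nat -> 'cV[F]_m) : 'M[F]_(m, n) :=
  \matrix_(r < m, c < n) b c.+1 r 0.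

(* The k-th step (1 <= k) of the procedure, with lambda-approximate SIV oracle output
   b k, chosen column index j k, and matrices Amat (k-1) -> Amat k. *)
Definition proc_step {R : realFieldType} {m n : nat} (A : 'M[rat]_(m, n)) (lam : R)
  (Amat : nat -> 'M[rat]_(m, n)) (b : nat -> 'cV[rat]_m) (j : nat -> 'I_n) (k : nat) : Prop :=
  [/\
      in_col A (b k) /\ ~ in_span_prefix b k (b k),
      (forall a, in_col A a -> ~ in_span_prefix b k a ->
         ((nnzv (b k))%:R <= lam * (nnzv a)%:R :> R)),
      (forall i, (1 <= i < k)%N -> col (j k) (Amat k.-1) != b i),
      (forall v, in_col (replace_col (Amat k.-1) (j k) (b k)) v <-> in_col (Amat k.-1) v)
    & Amat k = replace_col (Amat k.-1) (j k) (b k)].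

From HB Require Import structures.
From mathcomp Require Import all_boot all_order all_algebra zify.
Set Implicit Arguments. Unset Strict Implicit. Unset Printing Implicit Defensive.
Import Order.TTheory GRing.Theory Num.Theory.
Local Open Scope ring_scope.

(* Let [N] have columns [b 1, ..., b n] and let [M = A *m Y] with [Y] invertible.
   The [b k] are linearly independent vectors of [col A], so [N = A *m X] with [X]
   invertible.  Before step [k] the span of [b 1, ..., b (k-1)] has dimension at most
   [k - 1] while [M] has rank [n], so at least [n - k + 1] columns [c] of [M] lie in
   [col A] outside that span, and the oracle guarantee gives [||b k||_0 <= lam ||c||_0]
   for each of them.  Matching the steps greedily to distinct columns of [M] yields
   [nnz N <= lam nnz M]. *)

Lemma nnz_sum_col (F : fieldType) (m n : nat) (M : 'M[F]_(m, n)) :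
  nnz M = (\sum_(j < n) nnzv (col j M))%N.
Proof.
rewrite /nnz /nnzv -sum1_card big_mkcond /=.
under eq_bigr => ij _ do rewrite inE.
rewrite -(pair_big xpredT xpredT (fun i j => if M i j != 0 then 1%N else 0%N)) exchange_big /=.
apply: eq_bigr => j _; rewrite -sum1_card [RHS]big_mkcond /=.
by apply: eq_bigr => i _; rewrite !inE mxE.
Qed.

Section PrefixSpan.

Variables (F : fieldType) (m n : nat) (b : nat -> 'cV[F]_m).

(* Rows [b 1^T, ..., b (k-1)^T] padded with zero rows, so that for [k <= n.+1]
   its row space is the transpose of [span {b 1, ..., b (k-1)}]. *)
Definition prefix_mx (k : nat) : 'M[F]_(n, m) :=
  \matrix_(i < n, c < m) (if (i < k.-1)%N then b i.+1 c 0 else 0).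

Lemma row_prefix_mx k (i : 'I_n) :
  row i (prefix_mx k) = if (i < k.-1)%N then (b i.+1)^T else 0.
Proof. by apply/rowP => c; rewrite !mxE; case: ifP; rewrite ?mxE. Qed.

Lemma prefix_mx_row_sub k (i : 'I_n) : (i < k.-1)%N -> ((b i.+1)^T <= prefix_mx k)%MS.
Proof. by move=> lt_ik; have := row_sub i (prefix_mx k); rewrite row_prefix_mx lt_ik. Qed.

Lemma prefix_mx_subS k : (prefix_mx k <= prefix_mx k.+1)%MS.
Proof.
apply/row_subP => i; rewrite row_prefix_mx; case: ifP => [lt_ik | _]; last exact: sub0mx.
exact/prefix_mx_row_sub/(leq_trans lt_ik (leq_pred k)).
Qed.

Lemma rank_prefix_mx k : (\rank (prefix_mx k) <= k.-1)%N.
Proof.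
have [le_kn | lt_nk] := leqP k.-1 n; last exact: leq_trans (rank_leq_row _) (ltnW lt_nk).
have -> : prefix_mx k = (pid_mx k.-1 : 'M_n) *m prefix_mx k.
  apply/matrixP => i c; rewrite [RHS]mxE (bigD1 i) //= big1 => [|l /negbTE ne_li].
    by rewrite !mxE eqxx addr0; case: ifP; rewrite ?mul1r ?mul0r.
  by rewrite !mxE (_ : i == l :> nat = false) ?mul0r // eq_sym; apply: ne_li.
by apply: leq_trans (mxrankM_maxl _ _) _; rewrite rank_pid_mx.
Qed.

Lemma in_span_prefixP k v :
  (k.-1 <= n)%N -> in_span_prefix b k v <-> (v^T <= prefix_mx k)%MS.
Proof.
move=> le_kn; have sum_prefix G :
    \sum_(1 <= i < k) G i = \sum_(i < n | (i < k.-1)%N) G i.+1 :> 'cV[F]_m.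
  by rewrite big_add1 big_mkord (big_ord_widen _ (fun i => G i.+1) le_kn).
split=> [[c ->] | /submxP[D vD]].
  rewrite sum_prefix linear_sum summx_sub // => i lt_ik.
  by rewrite linearZ scalemx_sub ?prefix_mx_row_sub.
exists (fun j => \sum_(i < n | i.+1 == j) D 0 i).
rewrite sum_prefix -[v]trmxK vD mulmx_sum_row linear_sum [RHS]big_mkcond /=.
apply: eq_bigr => i _; rewrite row_prefix_mx; case: ifP => _; last by rewrite scaler0 trmx0.
by rewrite linearZ /= trmxK (big_pred1 i) // => l; rewrite /= eqSS.
Qed.

Lemma rank_prefix_mx_free :
  (forall k, (1 <= k <= n)%N -> ~ in_span_prefix b k (b k)) ->
  forall k, (k <= n)%N -> \rank (prefix_mx k.+1) = k.
Proof.
move=> b_free; elim=> [|k IHk] le_kn; apply/eqP; rewrite eqn_leq rank_prefix_mx //=.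
have lt_prefix : (prefix_mx k.+1 < prefix_mx k.+2)%MS.
  rewrite ltmxE prefix_mx_subS /=; apply/negP.
  move/(submx_trans (@prefix_mx_row_sub k.+2 (Ordinal le_kn) (ltnSn k))).
  by move/(@in_span_prefixP k.+1 _ (ltnW le_kn)); apply: b_free.
by rewrite -[X in (X < _)%N](IHk (ltnW le_kn)) rank_ltmx.
Qed.

Lemma trmx_cols_mx : (cols_mx n b)^T = prefix_mx n.+1.
Proof. by apply/matrixP => i c; rewrite !mxE /= ltn_ord. Qed.

End PrefixSpan.

Lemma in_colP (F : fieldType) (m n : nat) (A : 'M[F]_(m, n)) (v : 'cV[F]_m) :
  in_col A v <-> (v^T <= A^T)%MS.
Proof.
split=> [[x ->] | /submxP[D vD]]; first by rewrite trmx_mul submxMl.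
by exists D^T; rewrite -[v]trmxK vD trmx_mul trmxK.
Qed.

Lemma in_col_colM (F : fieldType) (m n p : nat) (A : 'M[F]_(m, n)) (Y : 'M[F]_(n, p)) i :
  in_col A (col i (A *m Y)).
Proof. by exists (col i Y); rewrite !colE mulmxA. Qed.

Lemma col_basis_change (F : fieldType) (m n : nat) (A N : 'M[F]_(m, n)) :
  \rank N = n -> (N^T <= A^T)%MS -> exists2 X, X \in unitmx & N = A *m X.
Proof.
move=> rankN sNA; pose X := (N^T *m pinvmx A^T)^T.
have N_AX : N = A *m X by apply: trmx_inj; rewrite trmx_mul trmxK mulmxKpV.
exists X => //; rewrite -row_free_unit /row_free eqn_leq rank_leq_row /=.
by rewrite -[X in (X <= _)%N]rankN [in X in (\rank X <= _)%N]N_AX mxrankM_maxr.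
Qed.

Lemma rank_leq_add_card_rows_notin (F : fieldType) (n m p : nat)
    (C : 'M[F]_(n, m)) (P : 'M[F]_(p, m)) :
  (\rank C <= \rank P + #|[set i | ~~ (row i C <= P)%MS]|)%N.
Proof.
set E := [set i | _]; pose CE := \matrix_(r < #|E|) row (enum_val r) C.
have sC : (C <= P + CE)%MS.
  apply/row_subP => i; have [iE | ] := boolP (i \in E).
    have <- : row (enum_rank_in iE i) CE = row i C by rewrite rowK enum_rankK_in.
    exact: submx_trans (row_sub _ _) (addsmxSr _ _).
  by rewrite inE negbK => /submx_trans; apply; apply: addsmxSl.
apply: leq_trans (mxrankS sC) (leq_trans (mxrank_adds_leqif _ _).1 _).
by rewrite leq_add2l rank_leq_row.
Qed.

(* Assign [k = n, n - 1, ..., 1] in turn to an unused index of [E k]: when [k] is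
   reached only [n - k] indices are used, fewer than [#|E k|]. *)
Lemma sum_le_greedy_assignment (R : numDomainType) (n : nat) (beta : nat -> R)
    (u : 'I_n -> R) (E : nat -> {set 'I_n}) :
  (forall i, 0 <= u i) ->
  (forall k, (1 <= k <= n)%N -> (n <= k.-1 + #|E k|)%N) ->
  (forall k i, (1 <= k <= n)%N -> i \in E k -> beta k <= u i) ->
  \sum_(1 <= k < n.+1) beta k <= \sum_i u i.
Proof.
move=> u_ge0 E_large E_dom.
have assign d : (d <= n)%N -> exists2 S : {set 'I_n}, (#|S| <= d)%N &
    \sum_((n - d).+1 <= k < n.+1) beta k <= \sum_(i in S) u i.
  elim: d => [|d IHd] le_dn.
    by exists set0; rewrite ?cards0 // subn0 big_geq // big_set0.
  have [S cardS sumS] := IHd (ltnW le_dn).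
  set p := (n - d.+1)%N; have p_def : (n - d = p.+1)%N by rewrite subnSK.
  have p_range : (1 <= p.+1 <= n)%N by rewrite -p_def subn_gt0 le_dn leq_subr.
  have [i iE iS] : exists2 i, i \in E p.+1 & i \notin S.
    apply/subsetPn/negP => /subset_leq_card le_ES.
    have := leq_trans (E_large _ p_range) (leq_add (leqnn p) (leq_trans le_ES cardS)).
    by rewrite /p; lia.
  exists (i |: S); first by rewrite cardsU1 iS.
  rewrite big_ltn ?ltnS ?(andP p_range).2 // big_setU1 //= lerD ?(E_dom _ _ p_range) //.
  by rewrite -p_def.
have [S _ sumS] := assign n (leqnn n).
rewrite subnn in sumS; apply: le_trans sumS _.
by rewrite [leRHS](bigID (mem S)) /= lerDl sumr_ge0.
Qed.

Section ApproximateOracle.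

Variables (F : fieldType) (R : realFieldType) (lam : R) (m n : nat).
Variables (A : 'M[F]_(m, n)) (b : nat -> 'cV[F]_m).

Hypothesis b_col : forall k, (1 <= k <= n)%N -> in_col A (b k).
Hypothesis b_free : forall k, (1 <= k <= n)%N -> ~ in_span_prefix b k (b k).

Lemma cols_mx_basis_change : exists2 X, X \in unitmx & cols_mx n b = A *m X.
Proof.
apply: col_basis_change; first by rewrite -mxrank_tr trmx_cols_mx rank_prefix_mx_free.
apply/row_subP => i; rewrite trmx_cols_mx row_prefix_mx ltn_ord.
by have /in_colP := @b_col i.+1 (ltn_ord i).
Qed.

Hypothesis lam_ge0 : 0 <= lam.
Hypothesis b_approx : forall k, (1 <= k <= n)%N -> forall a, in_col A a ->
  ~ in_span_prefix b k a -> (nnzv (b k))%:R <= lam * (nnzv a)%:R.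

Lemma nnz_cols_mx_le (Y : 'M[F]_n) :
  \rank A = n -> Y \in unitmx -> (nnz (cols_mx n b))%:R <= lam * (nnz (A *m Y))%:R.
Proof.
move=> rankA unitY; set M := A *m Y.
have rankMT : \rank M^T = n by rewrite mxrank_tr mxrankMfree ?row_free_unit.
have -> : nnz (cols_mx n b) = (\sum_(1 <= k < n.+1) nnzv (b k))%N.
  rewrite nnz_sum_col big_add1 big_mkord; apply: eq_bigr => j _.
  by congr nnzv; apply/colP => r; rewrite !mxE.
rewrite nnz_sum_col !natr_sum mulr_sumr.
pose E k := [set i | ~~ (row i M^T <= prefix_mx n b k)%MS].
apply: (@sum_le_greedy_assignment _ _ _ _ E) => [i | k k_range | k i k_range].
- by rewrite mulr_ge0 ?ler0n.
- rewrite -[X in (X <= _)%N]rankMT.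
  apply: leq_trans (rank_leq_add_card_rows_notin _ (prefix_mx n b k)) _.
  by rewrite leq_add2r rank_prefix_mx.
- have le_kn : (k.-1 <= n)%N by rewrite (leq_trans (leq_pred k)) ?(andP k_range).2.
  rewrite inE -tr_col => /negP notin_span; apply: b_approx => //; first exact: in_col_colM.
  by move/(in_span_prefixP b _ le_kn).
Qed.

End ApproximateOracle.

Theorem mainTheorem10 (R : realFieldType) (lam : R) (m n : nat) (A : 'M[rat]_(m, n))
  (Amat : nat -> 'M[rat]_(m, n)) (b : nat -> 'cV[rat]_m) (j : nat -> 'I_n) :
  1 <= lam ->
  \rank A = n ->
  Amat 0%N = A ->
  (forall k : nat, (1 <= k <= n)%N -> proc_step A lam Amat b j k) ->
  (exists2 X : 'M[rat]_n, X \in unitmx & cols_mx n b = A *m X) /\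
  (forall Y : 'M[rat]_n, Y \in unitmx ->
     (nnz (cols_mx n b))%:R <= lam * (nnz (A *m Y))%:R).
Proof.
move=> lam_ge1 rankA _ step.
have b_col k : (1 <= k <= n)%N -> in_col A (b k) by move/step => [[]].
have b_free k : (1 <= k <= n)%N -> ~ in_span_prefix b k (b k) by move/step => [[]].
have b_approx k : (1 <= k <= n)%N -> forall a, in_col A a -> ~ in_span_prefix b k a ->
    (nnzv (b k))%:R <= lam * (nnzv a)%:R by move/step => [].
split; first exact: cols_mx_basis_change.
have lam_ge0 : 0 <= lam := le_trans ler01 lam_ge1.
by move=> Y; apply: nnz_cols_mx_le.
Qed.
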